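(* The operator $\widetilde{R}$ is well-defined on circuits modulo $A$: for all circuits $c,d:a\to b$, if $c$ and $d$ are equal modulo $A$, then $\widetilde{R}[c]$ and $\widetilde{R}[d]$ are equal modulo $A$.
   Context: A circuit is a morphism of the free symmetric strict monoidal category whose objects are natural numbers (tensor = addition) generated by $\mathsf{discard}:1\to 0$, $\mathsf{copy}:1\to 2$, $\mathsf{zero}:0\to1$, $\mathsf{add}:2\to1$, $\mathsf{one}:0\to 1$, $\mathsf{and}:2\to 1$. Composition is diagrammatic ($f;g$ = first $f$ then $g$), $\sigma_{m,n}$ is the symmetry $m+n\to n+m$ ($\sigma=\sigma_{1,1}$), $\mathsf{copy}_n:n\to 2n$, $\mathsf{discard}_n:n\to0$ are the evident composites. $A$ is the set of equations: $\mathsf{copy};\sigma=\mathsf{copy}$; $\mathsf{copy};(\mathsf{copy}\otimes \mathrm{id}_1)=\mathsf{copy};(\mathrm{id}_1\otimes\mathsf{copy})$; $\mathsf{copy};(\mathsf{discard}\otimes\mathrm{id}_1)=\mathrm{id}_1$; for every circuit $f:a\to b$, $f;\mathsf{copy}_b=\mathsf{copy}_a;(f\otimes f)$ and $f;\mathsf{discard}_b=\mathsf{discard}_a$; commutativity, associativity and unit laws for $(\mathsf{add},\mathsf{zero})$ and for $(\mathsf{and},\mathsf{one})$; $\mathsf{copy};\mathsf{add}=\mathsf{discard};\mathsf{zero}$; and distributivity $(\mathrm{id}_1\otimes\mathsf{add});\mathsf{and}=(\mathsf{copy}\otimes\mathrm{id}_2);(\mathrm{id}_1\otimes\sigma\otimes\mathrm{id}_1);(\mathsf{and}\otimes\mathsf{and});\mathsf{add}$.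 ''Equal modulo $A$'' means related by the smallest congruence (w.r.t. composition and tensor, and including the symmetric monoidal laws) containing $A$. For each circuit $f:a\to b$ the circuit $\widetilde{R}[f]:a+b\to a$ is defined inductively (it is the syntactic reverse derivative, computing $(x,\delta)\mapsto J_f(x)^{T}\delta$): on generators, $\widetilde{R}[\mathsf{discard}]=\mathsf{discard};\mathsf{zero}$; $\widetilde{R}[\mathsf{copy}]=\mathsf{discard}\otimes\mathsf{add}$; $\widetilde{R}[\mathsf{zero}]=\mathsf{discard}$; $\widetilde{R}[\mathsf{one}]=\mathsf{discard}$; $\widetilde{R}[\mathsf{add}]=\mathsf{discard}\otimes\mathsf{discard}\otimes\mathsf{copy}$; $\widetilde{R}[\mathsf{and}]=(\sigma\otimes\mathsf{copy});(\mathrm{id}_1\otimes\sigma\otimes\mathrm{id}_1);(\mathsf{and}\otimes\mathsf{and})$ (i.e. $(x_1,x_2,\delta)\mapsto(x_2\delta,x_1\delta)$); on identities and symmetries, $\widetilde{R}[\mathrm{id}_n]=\mathsf{discard}_n\otimes\mathrm{id}_n$ and $\widetilde{R}[\sigma_{m,n}]=\mathsf{discard}_{m+n}\otimes\sigma_{n,m}$; for $f:a\to b$, $g:b\to c$, $\widetilde{R}[f;g]=(\mathsf{copy}_a\otimes\mathrm{id}_c);(\mathrm{id}_a\otimes f\otimes \mathrm{id}_c);(\mathrm{id}_a\otimes\widetilde{R}[g]);\widetilde{R}[f]$; for $f:a\to b$, $g:c\to d$, $\widetilde{R}[f\otimes g]=(\mathrm{id}_a\otimes\sigma_{c,b}\otimes\mathrm{id}_d);(\widetilde{R}[f]\otimes\widetilde{R}[g])$.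 *)

(* Circuits = terms of the free symmetric strict monoidal category
   (objects: nat, tensor = +) on the given generators, presented as raw syntax
   with computed domain/codomain and a well-typedness predicate. *)
From Stdlib Require Import Arith.

Inductive gen : Type :=
| g_discard | g_copy | g_zero
| g_add | g_one | g_and .

Definition gen_dom (x : gen) : nat :=
  match x with
  | g_discard => 1 | g_copy => 1 | g_zero => 0
  | g_add => 2 | g_one => 0 | g_and => 2
  end.

Definition gen_cod (x : gen) : nat :=
  match x with
  | g_discard => 0 | g_copy => 2 | g_zero => 1
  | g_add => 1 | g_one => 1 | g_and => 1
  end.

Inductive circ : Type :=
| Gen  : gen -> circ
| Id   : nat -> circ
| Sym  : nat -> nat -> circ
| Comp : circ -> circ -> circ        (* f ; g  (diagrammatic) *)
| Tens : circ -> circ -> circ.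

Fixpoint dom (f : circ) : nat :=
  match f with
  | Gen x => gen_dom x
  | Id n => n
  | Sym m n => m + n
  | Comp f _ => dom f
  | Tens f g => dom f + dom g
  end.

Fixpoint cod (f : circ) : nat :=
  match f with
  | Gen x => gen_cod x
  | Id n => n
  | Sym m n => n + m
  | Comp _ g => cod g
  | Tens f g => cod f + cod g
  end.

Fixpoint wt (f : circ) : Prop :=
  match f with
  | Gen _ | Id _ | Sym _ _ => True
  | Comp f g => wt f /\ wt g /\ cod f = dom g
  | Tens f g => wt f /\ wt g
  end.

Definition is_circuit (a b : nat) (f : circ) : Prop :=
  wt f /\ dom f = a /\ cod f = b.

Notation discard := (Gen g_discard).
Notation copy := (Gen g_copy).
Notation zero := (Gen g_zero).
Notation add := (Gen g_add).
Notation one := (Gen g_one).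
Notation and_g := (Gen g_and).
Notation sigma := (Sym 1 1).

(* copy_n : n -> n+n, (x) |-> (x, x) *)
Fixpoint copy_n (n : nat) : circ :=
  match n with
  | 0 => Id 0
  | S n => Comp (Tens copy (copy_n n)) (Tens (Tens (Id 1) (Sym 1 n)) (Id n))
  end.

Fixpoint discard_n (n : nat) : circ :=
  match n with
  | 0 => Id 0
  | S n => Tens discard (discard_n n)
  end.

Inductive ax : circ -> circ -> Prop :=
| ax_assoc f g h : ax (Comp (Comp f g) h) (Comp f (Comp g h))
| ax_idl f : ax (Comp (Id (dom f)) f) f
| ax_idr f : ax (Comp f (Id (cod f))) f
| ax_interchange f g h k : ax (Tens (Comp f g) (Comp h k)) (Comp (Tens f h) (Tens g k))
| ax_tens_id m n : ax (Tens (Id m) (Id n)) (Id (m + n))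
| ax_tens_assoc f g h : ax (Tens (Tens f g) h) (Tens f (Tens g h))
| ax_tens_unitl f : ax (Tens (Id 0) f) f
| ax_tens_unitr f : ax (Tens f (Id 0)) f
| ax_sym_inv m n : ax (Comp (Sym m n) (Sym n m)) (Id (m + n))
| ax_sym_nat f g : ax (Comp (Tens f g) (Sym (cod f) (cod g)))
                      (Comp (Sym (dom f) (dom g)) (Tens g f))
| ax_sym_hex1 m n p : ax (Sym m (n + p)) (Comp (Tens (Sym m n) (Id p)) (Tens (Id n) (Sym m p)))
| ax_sym_hex2 m n p : ax (Sym (m + n) p) (Comp (Tens (Id m) (Sym n p)) (Tens (Sym m p) (Id n)))
| ax_sym_unitl n : ax (Sym 0 n) (Id n)
| ax_sym_unitr n : ax (Sym n 0) (Id n)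
| A_copy_comm : ax (Comp copy sigma) copy
| A_copy_assoc : ax (Comp copy (Tens copy (Id 1))) (Comp copy (Tens (Id 1) copy))
| A_copy_unit : ax (Comp copy (Tens discard (Id 1))) (Id 1)
| A_copy_nat f : ax (Comp f (copy_n (cod f))) (Comp (copy_n (dom f)) (Tens f f))
| A_discard_nat f : ax (Comp f (discard_n (cod f))) (discard_n (dom f))
| A_add_comm : ax (Comp sigma add) add
| A_add_assoc : ax (Comp (Tens add (Id 1)) add) (Comp (Tens (Id 1) add) add)
| A_add_unitl : ax (Comp (Tens zero (Id 1)) add) (Id 1)
| A_add_unitr : ax (Comp (Tens (Id 1) zero) add) (Id 1)
| A_and_comm : ax (Comp sigma and_g) and_g
| A_and_assoc : ax (Comp (Tens and_g (Id 1)) and_g) (Comp (Tens (Id 1) and_g) and_g)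
| A_and_unitl : ax (Comp (Tens one (Id 1)) and_g) (Id 1)
| A_and_unitr : ax (Comp (Tens (Id 1) one) and_g) (Id 1)
| A_copy_add : ax (Comp copy add) (Comp discard zero)
| A_distr : ax (Comp (Tens (Id 1) add) and_g)
               (Comp (Comp (Comp (Tens copy (Id 2)) (Tens (Tens (Id 1) sigma) (Id 1)))
                           (Tens and_g and_g)) add).

(* Equality modulo A: the smallest congruence (w.r.t. ; and (x)) on well-typed
   circuits, relating only circuits of the same type, containing the laws above
   (all instances in which both sides are well-typed circuits of the same type). *)
Inductive eqA : circ -> circ -> Prop :=
| eqA_ax f g : ax f g -> wt f -> wt g -> dom f = dom g -> cod f = cod g -> eqA f g
| eqA_refl f : wt f -> eqA f f
| eqA_sym f g : eqA f g -> eqA g f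
| eqA_trans f g h : eqA f g -> eqA g h -> eqA f h
| eqA_comp f f' g g' : eqA f f' -> eqA g g' -> cod f = dom g -> eqA (Comp f g) (Comp f' g')
| eqA_tens f f' g g' : eqA f f' -> eqA g g' -> eqA (Tens f g) (Tens f' g').

(* The syntactic reverse derivative  R[f] : dom f + cod f -> dom f. *)
Definition R_gen (x : gen) : circ :=
  match x with
  | g_discard => Comp discard zero
  | g_copy => Tens discard add
  | g_zero => discard
  | g_one => discard
  | g_add => Tens (Tens discard discard) copy
  | g_and => Comp (Comp (Tens sigma copy) (Tens (Tens (Id 1) sigma) (Id 1))) (Tens and_g and_g)
  end.

Fixpoint Rt (f : circ) : circ :=
  match f with
  | Gen x => R_gen x
  | Id n => Tens (discard_n n) (Id n)
  | Sym m n => Tens (discard_n (m + n)) (Sym n m)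
  | Comp f g =>
      let a := dom f in let c := cod g in
      Comp (Comp (Comp (Tens (copy_n a) (Id c)) (Tens (Tens (Id a) f) (Id c)))
                 (Tens (Id a) (Rt g)))
           (Rt f)
  | Tens f g =>
      let a := dom f in let b := cod f in let c := dom g in let d := cod g in
      Comp (Tens (Tens (Id a) (Sym c b)) (Id d)) (Tens (Rt f) (Rt g))
  end.

(* Circuits modulo A present commutative rings of characteristic 2: besides the
   ring laws, [copy; add = discard; zero] says x + x = 0.  Read a circuit a -> b as
   a b-tuple of polynomials in a variables.  This reading is sound for A, and
   conversely every circuit is A-equal to a canonical circuit built from its
   polynomials, which depends only on them up to the ring laws; so two circuits
   are equal modulo A exactly when their polynomials are.  By the chain rule, the
   polynomials of R[f] are (x, δ) ↦ J_f(x)ᵀ δ, computed from those of f alone, so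
   A-equal circuits have A-equal reverse derivatives. *)

From Stdlib Require Import Arith Lia Setoid Morphisms Ring.

(** * Polynomials in characteristic 2 *)

Inductive term : Type :=
| TVar (i : nat) | TZero | TOne | TAdd (s t : term) | TMul (s t : term).

Inductive teq : term -> term -> Prop :=
| teq_refl t : teq t t
| teq_sym s t : teq s t -> teq t s
| teq_trans s t u : teq s t -> teq t u -> teq s u
| teq_add s s' t t' : teq s s' -> teq t t' -> teq (TAdd s t) (TAdd s' t')
| teq_mul s s' t t' : teq s s' -> teq t t' -> teq (TMul s t) (TMul s' t')
| teq_add0 t : teq (TAdd TZero t) t
| teq_addC s t : teq (TAdd s t) (TAdd t s)
| teq_addA s t u : teq (TAdd (TAdd s t) u) (TAdd s (TAdd t u))
| teq_mul1 t : teq (TMul TOne t) t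
| teq_mulC s t : teq (TMul s t) (TMul t s)
| teq_mulA s t u : teq (TMul (TMul s t) u) (TMul s (TMul t u))
| teq_distr s t u : teq (TMul s (TAdd t u)) (TAdd (TMul s t) (TMul s u))
| teq_char2 t : teq (TAdd t t) TZero.

#[export] Instance teq_Equivalence : Equivalence teq.
Proof. split; [intro; apply teq_refl | intros ??; apply teq_sym | intros ???; apply teq_trans]. Qed.
#[export] Instance TAdd_Proper : Proper (teq ==> teq ==> teq) TAdd.
Proof. intros ?? H ?? H'; apply teq_add; auto. Qed.
#[export] Instance TMul_Proper : Proper (teq ==> teq ==> teq) TMul.
Proof. intros ?? H ?? H'; apply teq_mul; auto. Qed.

(* In characteristic 2 every element is its own opposite, so [teq] is a ring
   with the identity as opposite and addition as subtraction. *)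
Definition topp (t : term) : term := t.

#[export] Instance topp_Proper : Proper (teq ==> teq) topp.
Proof. intros ?? H; exact H. Qed.

Lemma term_ring_theory : ring_theory TZero TOne TAdd TMul TAdd topp teq.
Proof.
  split; intros; unfold topp.
  - apply teq_add0.
  - apply teq_addC.
  - symmetry; apply teq_addA.
  - apply teq_mul1.
  - apply teq_mulC.
  - symmetry; apply teq_mulA.
  - rewrite teq_mulC, teq_distr, (teq_mulC z x), (teq_mulC z y); reflexivity.
  - reflexivity.
  - apply teq_char2.
Qed.

Lemma term_ring_ext : ring_eq_ext TAdd TMul topp teq.
Proof. split; auto with typeclass_instances. Qed.

Add Ring term_ring : term_ring_theory (setoid teq_Equivalence term_ring_ext).

Lemma teq_var i j : i = j -> teq (TVar i) (TVar j).
Proof. intros ->; reflexivity. Qed.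

Fixpoint subst (s : nat -> term) (t : term) : term :=
  match t with
  | TVar i => s i
  | TZero => TZero
  | TOne => TOne
  | TAdd u v => TAdd (subst s u) (subst s v)
  | TMul u v => TMul (subst s u) (subst s v)
  end.

Fixpoint bounded (n : nat) (t : term) : Prop :=
  match t with
  | TVar i => i < n
  | TZero | TOne => True
  | TAdd u v | TMul u v => bounded n u /\ bounded n v
  end.

Lemma subst_comp s r t : subst s (subst r t) = subst (fun i => subst s (r i)) t.
Proof. induction t; simpl; congruence. Qed.

Lemma subst_ext s r t : (forall i, s i = r i) -> subst s t = subst r t.
Proof. induction t; simpl; intros; f_equal; auto. Qed.

Lemma subst_ext_bounded n s r t :
  bounded n t -> (forall i, i < n -> s i = r i) -> subst s t = subst r t.
Proof. induction t; simpl; intros; try tauto; f_equal; firstorder. Qed.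

Lemma subst_var t : subst TVar t = t.
Proof. induction t; simpl; congruence. Qed.

Lemma subst_id_bounded n s t :
  bounded n t -> (forall i, i < n -> s i = TVar i) -> subst s t = t.
Proof. intros; rewrite (subst_ext_bounded n s TVar t); auto; apply subst_var. Qed.

Lemma subst_teq_bounded n s r t :
  bounded n t -> (forall i, i < n -> teq (s i) (r i)) -> teq (subst s t) (subst r t).
Proof.
  induction t; simpl; intros; try reflexivity; auto.
  all: destruct H; rewrite IHt1, IHt2 by auto; reflexivity.
Qed.

Lemma subst_teq s t t' : teq t t' -> teq (subst s t) (subst s t').
Proof.
  induction 1; simpl; try (constructor; fail); eauto using teq_trans, teq_sym, teq_add, teq_mul.
Qed.

Lemma bounded_mono n m t : bounded n t -> n <= m -> bounded m t.
Proof. induction t; simpl; intuition lia. Qed.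

Lemma bounded_subst n m s t :
  bounded n t -> (forall i, i < n -> bounded m (s i)) -> bounded m (subst s t).
Proof. induction t; simpl; intuition. Qed.

Fixpoint deriv (i : nat) (t : term) : term :=
  match t with
  | TVar k => if k =? i then TOne else TZero
  | TZero | TOne => TZero
  | TAdd u v => TAdd (deriv i u) (deriv i v)
  | TMul u v => TAdd (TMul (deriv i u) v) (TMul u (deriv i v))
  end.

Lemma deriv_teq i t t' : teq t t' -> teq (deriv i t) (deriv i t').
Proof.
  induction 1; simpl.
  - reflexivity.
  - symmetry; auto.
  - etransitivity; eauto.
  - rewrite IHteq1, IHteq2; reflexivity.
  - rewrite IHteq1, IHteq2, H, H0; reflexivity.
  - ring. - ring. - ring. - ring. - ring. - ring. - ring.
  - apply teq_char2.
Qed.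

Lemma bounded_deriv n i t : bounded n t -> bounded n (deriv i t).
Proof. induction t; simpl; try destruct (_ =? _); simpl; intuition. Qed.

Lemma deriv_bounded_out n i t : bounded n t -> n <= i -> teq (deriv i t) TZero.
Proof.
  induction t; simpl; intros.
  - destruct (Nat.eqb_spec i0 i); [lia | reflexivity].
  - reflexivity.
  - reflexivity.
  - destruct H; rewrite IHt1, IHt2 by auto; ring.
  - destruct H; rewrite IHt1, IHt2 by auto; ring.
Qed.

Lemma deriv_shift a i t :
  deriv (a + i) (subst (fun x => TVar (a + x)) t) = subst (fun x => TVar (a + x)) (deriv i t).
Proof.
  induction t; simpl; try congruence.
  destruct (Nat.eqb_spec (a + i0) (a + i)), (Nat.eqb_spec i0 i); simpl; auto; lia.
Qed.

Lemma deriv_shift_below a i t : i < a -> teq (deriv i (subst (fun x => TVar (a + x)) t)) TZero.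
Proof.
  intros H; induction t; simpl.
  - destruct (Nat.eqb_spec (a + i0) i); [lia | reflexivity].
  - reflexivity.
  - reflexivity.
  - rewrite IHt1, IHt2; ring.
  - rewrite IHt1, IHt2; ring.
Qed.

Fixpoint tsum (m : nat) (f : nat -> term) : term :=
  match m with 0 => TZero | S m => TAdd (tsum m f) (f m) end.

Lemma tsum_teq m f g : (forall j, j < m -> teq (f j) (g j)) -> teq (tsum m f) (tsum m g).
Proof. induction m; simpl; intros; [reflexivity|]. rewrite IHm, H by (auto; lia); reflexivity. Qed.

Lemma tsum_add m f g : teq (tsum m (fun j => TAdd (f j) (g j))) (TAdd (tsum m f) (tsum m g)).
Proof. induction m; simpl; [ring|]. rewrite IHm; ring. Qed.

Lemma tsum_mul_l m a f : teq (tsum m (fun j => TMul a (f j))) (TMul a (tsum m f)).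
Proof. induction m; simpl; [ring|]. rewrite IHm; ring. Qed.

Lemma tsum_mul_r m a f : teq (tsum m (fun j => TMul (f j) a)) (TMul (tsum m f) a).
Proof. induction m; simpl; [ring|]. rewrite IHm; ring. Qed.

Lemma tsum_zero m f : (forall j, j < m -> teq (f j) TZero) -> teq (tsum m f) TZero.
Proof. induction m; simpl; intros; [reflexivity|]. rewrite IHm, H by (auto; lia); ring. Qed.

Lemma tsum_exchange m k f :
  teq (tsum m (fun j => tsum k (f j))) (tsum k (fun l => tsum m (fun j => f j l))).
Proof.
  induction m; simpl.
  - symmetry; apply tsum_zero; reflexivity.
  - rewrite IHm, <- tsum_add; reflexivity.
Qed.

Lemma tsum_split p q f : teq (tsum (p + q) f) (TAdd (tsum p f) (tsum q (fun j => f (p + j)))).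
Proof.
  induction q; simpl.
  - rewrite Nat.add_0_r; ring.
  - rewrite Nat.add_succ_r; simpl; rewrite IHq; ring.
Qed.

Lemma tsum_delta m f k :
  k < m -> (forall j, j < m -> j <> k -> teq (f j) TZero) -> teq (tsum m f) (f k).
Proof.
  induction m; simpl; intros; [lia|].
  destruct (Nat.eq_dec k m).
  - subst; rewrite (tsum_zero m f); [ring|]. intros; apply H0; lia.
  - rewrite IHm, (H0 m) by (auto; lia); ring.
Qed.

Lemma subst_tsum s m f : subst s (tsum m f) = tsum m (fun j => subst s (f j)).
Proof. induction m; simpl; congruence. Qed.

Lemma deriv_subst i b F t : bounded b t ->
  teq (deriv i (subst F t)) (tsum b (fun k => TMul (subst F (deriv k t)) (deriv i (F k)))).
Proof.
  induction t; simpl; intros Hv.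
  - symmetry; rewrite (tsum_delta b _ i0); auto.
    + rewrite Nat.eqb_refl; simpl; ring.
    + intros j Hj Hne; destruct (Nat.eqb_spec i0 j); [lia|]; simpl; ring.
  - symmetry; apply tsum_zero; intros; simpl; ring.
  - symmetry; apply tsum_zero; intros; simpl; ring.
  - destruct Hv; rewrite IHt1, IHt2, <- tsum_add by auto.
    apply tsum_teq; intros; simpl; ring.
  - destruct Hv; rewrite IHt1, IHt2 by auto.
    rewrite <- tsum_mul_r, <- tsum_mul_l, <- tsum_add.
    apply tsum_teq; intros; simpl; ring.
Qed.

(** * Circuits modulo A as a setoid *)

Lemma eqA_typed f g : eqA f g -> wt f /\ wt g /\ dom f = dom g /\ cod f = cod g.
Proof. induction 1; simpl; intuition congruence. Qed.

(* [eqA] only relates well-typed circuits; [ceq] extends it to all raw terms so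
   that it is an equivalence and a congruence for [Comp] and [Tens] without side
   conditions, which makes setoid rewriting available. *)
Definition ceq (f g : circ) : Prop :=
  dom f = dom g /\ cod f = cod g /\ (wt f -> eqA f g) /\ (wt g -> eqA f g).

Infix "≈" := ceq (at level 70).

#[export] Instance ceq_Equivalence : Equivalence ceq.
Proof.
  split.
  - intro f; repeat split; intros; apply eqA_refl; auto.
  - intros f g (H1 & H2 & H3 & H4); repeat split; auto; intros; apply eqA_sym; auto.
  - intros f g h (H1 & H2 & H3 & H4) (K1 & K2 & K3 & K4); repeat split; try congruence.
    + intro w; pose proof (H3 w) as e; destruct (eqA_typed _ _ e) as (_ & wg & _).
      eapply eqA_trans; eauto.
    + intro w; pose proof (K4 w) as e; destruct (eqA_typed _ _ e) as (wg & _ & _).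
      eapply eqA_trans; eauto.
Qed.

#[export] Instance Comp_Proper : Proper (ceq ==> ceq ==> ceq) Comp.
Proof.
  intros f f' (H1 & H2 & H3 & H4) g g' (K1 & K2 & K3 & K4); repeat split; simpl; auto.
  - intros (wf & wg & e); apply eqA_comp; auto.
  - intros (wf & wg & e); apply eqA_comp; auto; congruence.
Qed.

#[export] Instance Tens_Proper : Proper (ceq ==> ceq ==> ceq) Tens.
Proof.
  intros f f' (H1 & H2 & H3 & H4) g g' (K1 & K2 & K3 & K4); repeat split; simpl; try congruence.
  - intros (wf & wg); apply eqA_tens; auto.
  - intros (wf & wg); apply eqA_tens; auto.
Qed.

Lemma eqA_of_ceq f g : f ≈ g -> wt f -> eqA f g.
Proof. intros (_ & _ & H & _); auto. Qed.

Lemma ceq_ax f g : ax f g -> dom f = dom g -> cod f = cod g ->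
  (wt f -> wt g) -> (wt g -> wt f) -> f ≈ g.
Proof. intros; repeat split; auto; intros; apply eqA_ax; auto. Qed.

Lemma dom_copy_n n : dom (copy_n n) = n.
Proof. induction n; simpl; auto. Qed.
Lemma cod_copy_n n : cod (copy_n n) = n + n.
Proof. induction n; simpl; auto; lia. Qed.
Lemma wt_copy_n n : wt (copy_n n).
Proof. induction n; simpl; auto. rewrite cod_copy_n; repeat split; auto; lia. Qed.
Lemma dom_discard_n n : dom (discard_n n) = n.
Proof. induction n; simpl; auto. Qed.
Lemma cod_discard_n n : cod (discard_n n) = 0.
Proof. induction n; simpl; auto. Qed.
Lemma wt_discard_n n : wt (discard_n n).
Proof. induction n; simpl; auto. Qed.

#[export] Hint Resolve wt_copy_n wt_discard_n : circ_wt.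
#[export] Hint Rewrite dom_copy_n cod_copy_n dom_discard_n cod_discard_n : circ_type.

Ltac solve_type := simpl; autorewrite with circ_type in *; simpl; lia.
Ltac solve_wt := simpl; autorewrite with circ_type; repeat split; auto with circ_wt; try lia.

Lemma comp_assoc f g h : Comp (Comp f g) h ≈ Comp f (Comp g h).
Proof. apply ceq_ax; [constructor | simpl; auto ..]; intuition. Qed.

Lemma comp_idl n f : dom f = n -> Comp (Id n) f ≈ f.
Proof. intros <-; apply ceq_ax; [constructor | simpl; auto ..]; intuition. Qed.

Lemma comp_idr n f : cod f = n -> Comp f (Id n) ≈ f.
Proof. intros <-; apply ceq_ax; [constructor | simpl; auto ..]; intuition. Qed.

Lemma tens_comp f g h k : cod f = dom g -> cod h = dom k ->
  Tens (Comp f g) (Comp h k) ≈ Comp (Tens f h) (Tens g k).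
Proof. intros; apply ceq_ax; [constructor | simpl; auto ..]; intuition. Qed.

Lemma tens_id m n : Tens (Id m) (Id n) ≈ Id (m + n).
Proof. apply ceq_ax; [constructor | simpl; auto ..]. Qed.

Lemma tens_assoc f g h : Tens (Tens f g) h ≈ Tens f (Tens g h).
Proof. apply ceq_ax; [constructor | simpl; try lia ..]; intuition. Qed.

Lemma tens_unitl f : Tens (Id 0) f ≈ f.
Proof. apply ceq_ax; [constructor | simpl; auto ..]; intuition. Qed.

Lemma tens_unitr f : Tens f (Id 0) ≈ f.
Proof. apply ceq_ax; [constructor | simpl; try lia ..]; intuition. Qed.

Lemma sym_nat f g p q r s : cod f = p -> cod g = q -> dom f = r -> dom g = s ->
  Comp (Tens f g) (Sym p q) ≈ Comp (Sym r s) (Tens g f).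
Proof. intros <- <- <- <-; apply ceq_ax; [constructor | simpl; try lia ..]; intuition lia. Qed.

Lemma sym_unitl n : Sym 0 n ≈ Id n.
Proof. apply ceq_ax; [constructor | simpl; try lia ..]; intuition. Qed.

Lemma sym_unitr n : Sym n 0 ≈ Id n.
Proof. apply ceq_ax; [constructor | simpl; try lia ..]; intuition. Qed.

Lemma copy_n_nat f n m : wt f -> dom f = n -> cod f = m ->
  Comp f (copy_n m) ≈ Comp (copy_n n) (Tens f f).
Proof. intros w <- <-; apply ceq_ax; [constructor | ..]; solve_wt. Qed.

Lemma discard_n_nat f n m : wt f -> dom f = n -> cod f = m ->
  Comp f (discard_n m) ≈ discard_n n.
Proof. intros w <- <-; apply ceq_ax; [constructor | ..]; solve_wt. Qed.

Ltac by_axiom := apply ceq_ax; [constructor | solve_wt ..].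

Lemma discard_n1 : discard_n 1 ≈ discard.
Proof. apply tens_unitr. Qed.

Lemma discard_n_add p q : discard_n (p + q) ≈ Tens (discard_n p) (discard_n q).
Proof.
  induction p; simpl.
  - symmetry; apply tens_unitl.
  - rewrite IHp; symmetry; apply tens_assoc.
Qed.

Lemma copy_counitl : Comp copy (Tens discard (Id 1)) ≈ Id 1.
Proof. by_axiom. Qed.

Lemma copy_comm : Comp copy sigma ≈ copy.
Proof. by_axiom. Qed.

Lemma copy_counitr : Comp copy (Tens (Id 1) discard) ≈ Id 1.
Proof.
  rewrite <- copy_comm at 1; rewrite comp_assoc.
  rewrite <- (sym_nat discard (Id 1) 0 1 1 1) by reflexivity.
  rewrite sym_unitl, comp_idr by reflexivity; apply copy_counitl.
Qed.

Definition pair (n : nat) (f g : circ) : circ := Comp (copy_n n) (Tens f g).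

#[export] Instance pair_Proper n : Proper (ceq ==> ceq ==> ceq) (pair n).
Proof. intros ?? H ?? H'; unfold pair; rewrite H, H'; reflexivity. Qed.

Lemma comp_pair h f g k n : wt h -> dom h = k -> cod h = n -> dom f = n -> dom g = n ->
  Comp h (pair n f g) ≈ pair k (Comp h f) (Comp h g).
Proof.
  intros; unfold pair.
  rewrite <- comp_assoc, copy_n_nat by eauto.
  rewrite comp_assoc, <- tens_comp by congruence; reflexivity.
Qed.

Lemma pair_comp_tens n f g h k : cod f = dom h -> cod g = dom k ->
  Comp (pair n f g) (Tens h k) ≈ pair n (Comp f h) (Comp g k).
Proof. intros; unfold pair; rewrite comp_assoc, <- tens_comp by auto; reflexivity. Qed.

Lemma copy_n_counitl n : Comp (copy_n n) (Tens (discard_n n) (Id n)) ≈ Id n.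
Proof.
  induction n; simpl.
  - rewrite comp_idl by reflexivity; apply tens_unitl.
  - rewrite comp_assoc.
    assert (Hswap : Comp (Tens (Tens (Id 1) (Sym 1 n)) (Id n))
                         (Tens (Tens discard (discard_n n)) (Id (S n)))
                    ≈ Tens (Tens discard (Id 1)) (Tens (discard_n n) (Id n))).
    { rewrite (tens_assoc (Id 1) (Sym 1 n) (Id n)), (tens_assoc discard (discard_n n)).
      change (Id (S n)) with (Id (1 + n)); rewrite <- (tens_id 1 n).
      rewrite <- (tens_assoc (discard_n n) (Id 1) (Id n)).
      rewrite <- !tens_comp by solve_type.
      rewrite <- (sym_nat (Id 1) (discard_n n) 1 0 1 n) by solve_type.
      rewrite sym_unitr, comp_idr, !comp_idl by solve_type.
      rewrite (tens_assoc (Id 1) (discard_n n) (Id n)); symmetry; apply tens_assoc. }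
    rewrite Hswap, <- tens_comp by solve_type.
    rewrite IHn, copy_counitl; apply tens_id.
Qed.

Lemma id_pair_split p q :
  Id (p + q) ≈ pair (p + q) (Tens (Id p) (discard_n q)) (Tens (discard_n p) (Id q)).
Proof.
  induction p; unfold pair in *; simpl.
  - rewrite !tens_unitl; symmetry; apply copy_n_counitl.
  - rewrite comp_assoc.
    set (L := Tens (Id p) (discard_n q)).
    assert (Hswap : Comp (Tens (Tens (Id 1) (Sym 1 (p + q))) (Id (p + q)))
                         (Tens (Tens (Id (S p)) (discard_n q))
                               (Tens (Tens discard (discard_n p)) (Id q)))
                    ≈ Tens (Tens (Id 1) discard) (Tens L (Tens (discard_n p) (Id q)))).
    { rewrite (tens_assoc (Id 1) (Sym 1 (p + q)) (Id (p + q))).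
      change (Id (S p)) with (Id (1 + p)); rewrite <- (tens_id 1 p).
      rewrite (tens_assoc (Id 1) (Id p) (discard_n q)); fold L.
      rewrite (tens_assoc (Id 1) L), (tens_assoc discard (discard_n p) (Id q)).
      rewrite <- (tens_assoc L discard).
      rewrite <- !tens_comp by (subst L; solve_type).
      rewrite <- (sym_nat discard L 0 p 1 (p + q)) by (subst L; solve_type).
      rewrite sym_unitl, !comp_idr, comp_idl by (subst L; solve_type).
      rewrite tens_assoc, <- tens_assoc; reflexivity. }
    rewrite Hswap, <- tens_comp by (subst L; solve_type); subst L.
    rewrite <- IHp, copy_counitr; symmetry; apply (tens_id 1 (p + q)).
Qed.

Lemma copy_n_counitr n : Comp (copy_n n) (Tens (Id n) (discard_n n)) ≈ Id n.
Proof.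
  pose proof (id_pair_split n 0) as H; rewrite Nat.add_0_r in H; unfold pair in H.
  simpl in H; rewrite !tens_unitr in H; symmetry; exact H.
Qed.

Lemma pair_discard_r n f : dom f = n -> pair n f (discard_n n) ≈ f.
Proof.
  intros Hf; unfold pair.
  transitivity (Comp (copy_n n) (Comp (Tens (Id n) (discard_n n)) (Tens f (Id 0)))).
  - rewrite <- tens_comp, comp_idl, comp_idr by solve_type; reflexivity.
  - rewrite <- comp_assoc, copy_n_counitr, comp_idl by solve_type; apply tens_unitr.
Qed.

Lemma pair_discard_l n g : dom g = n -> pair n (discard_n n) g ≈ g.
Proof.
  intros Hg; unfold pair.
  transitivity (Comp (copy_n n) (Comp (Tens (discard_n n) (Id n)) (Tens (Id 0) g))).
  - rewrite <- tens_comp, comp_idl, comp_idr by solve_type; reflexivity.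
  - rewrite <- comp_assoc, copy_n_counitl, comp_idl by solve_type; apply tens_unitl.
Qed.

Lemma pair_fst n f g p q : wt g -> dom f = n -> dom g = n -> cod f = p -> cod g = q ->
  Comp (pair n f g) (Tens (Id p) (discard_n q)) ≈ f.
Proof.
  intros; rewrite pair_comp_tens, comp_idr, (discard_n_nat g n q) by solve [auto | solve_type].
  apply pair_discard_r; auto.
Qed.

Lemma pair_eta X n p q : wt X -> dom X = n -> cod X = p + q ->
  X ≈ pair n (Comp X (Tens (Id p) (discard_n q))) (Comp X (Tens (discard_n p) (Id q))).
Proof.
  intros; transitivity (Comp X (Id (p + q))); [symmetry; apply comp_idr; auto|].
  rewrite id_pair_split at 1; apply comp_pair; auto; solve_type.
Qed.

(** * Realizing polynomials by circuits *)

Definition proj (n i : nat) : circ :=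
  Tens (Tens (discard_n i) (Id 1)) (discard_n (n - i - 1)).

(* Variables out of range are realized as [0]; only bounded terms matter. *)
Fixpoint realize (n : nat) (t : term) : circ :=
  match t with
  | TVar i => if i <? n then proj n i else Comp (discard_n n) zero
  | TZero => Comp (discard_n n) zero
  | TOne => Comp (discard_n n) one
  | TAdd s u => Comp (pair n (realize n s) (realize n u)) add
  | TMul s u => Comp (pair n (realize n s) (realize n u)) and_g
  end.

Fixpoint realize_tuple (n m : nat) (F : nat -> term) : circ :=
  match m with
  | 0 => discard_n n
  | S m => pair n (realize n (F 0)) (realize_tuple n m (fun j => F (S j)))
  end.

Lemma proj_typed n i : i < n -> dom (proj n i) = n /\ cod (proj n i) = 1 /\ wt (proj n i).
Proof. intros; unfold proj; solve_wt. Qed.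

Lemma realize_typed n t : dom (realize n t) = n /\ cod (realize n t) = 1 /\ wt (realize n t).
Proof.
  induction t; simpl.
  - destruct (Nat.ltb_spec i n); [apply proj_typed; auto | solve_wt].
  - solve_wt.
  - solve_wt.
  - unfold pair; simpl; autorewrite with circ_type; intuition (try lia; auto with circ_wt).
  - unfold pair; simpl; autorewrite with circ_type; intuition (try lia; auto with circ_wt).
Qed.

Lemma dom_realize n t : dom (realize n t) = n. Proof. apply realize_typed. Qed.
Lemma cod_realize n t : cod (realize n t) = 1. Proof. apply realize_typed. Qed.
Lemma wt_realize n t : wt (realize n t). Proof. apply realize_typed. Qed.
#[export] Hint Resolve wt_realize : circ_wt.
#[export] Hint Rewrite dom_realize cod_realize : circ_type.

Lemma realize_tuple_typed n m F :
  dom (realize_tuple n m F) = n /\ cod (realize_tuple n m F) = m /\ wt (realize_tuple n m F).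
Proof.
  revert F; induction m; intros; simpl; autorewrite with circ_type; auto with circ_wt.
  unfold pair; simpl; autorewrite with circ_type.
  destruct (IHm (fun j => F (S j))) as (-> & -> & ?); intuition (try lia; auto with circ_wt).
Qed.

Lemma dom_realize_tuple n m F : dom (realize_tuple n m F) = n.
Proof. apply realize_tuple_typed. Qed.
Lemma cod_realize_tuple n m F : cod (realize_tuple n m F) = m.
Proof. apply realize_tuple_typed. Qed.
Lemma wt_realize_tuple n m F : wt (realize_tuple n m F).
Proof. apply realize_tuple_typed. Qed.
#[export] Hint Resolve wt_realize_tuple : circ_wt.
#[export] Hint Rewrite dom_realize_tuple cod_realize_tuple : circ_type.

Lemma realize_tuple_ext n m F G :
  (forall j, j < m -> F j = G j) -> realize_tuple n m F = realize_tuple n m G.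
Proof.
  revert F G; induction m; intros; simpl; auto.
  rewrite H by lia; f_equal; apply IHm; intros; apply H; lia.
Qed.

Lemma realize_var n i : i < n -> realize n (TVar i) = proj n i.
Proof. intros; simpl; destruct (Nat.ltb_spec i n); auto; lia. Qed.

Definition acts_as_subst (P : circ) (n k : nat) (s : nat -> term) : Prop :=
  wt P /\ dom P = n /\ cod P = k /\
  forall i, i < k -> Comp P (proj k i) ≈ realize n (s i).

Lemma comp_realize P n k s : acts_as_subst P n k s -> forall t, bounded k t ->
  Comp P (realize k t) ≈ realize n (subst s t).
Proof.
  intros (w & d & c & H); induction t; simpl; intros Hv.
  - destruct (Nat.ltb_spec i k); [apply H; auto | lia].
  - rewrite <- comp_assoc, (discard_n_nat P n k) by auto; reflexivity.
  - rewrite <- comp_assoc, (discard_n_nat P n k) by auto; reflexivity.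
  - destruct Hv; rewrite <- comp_assoc, (comp_pair P _ _ n k), IHt1, IHt2 by (auto; solve_type).
    reflexivity.
  - destruct Hv; rewrite <- comp_assoc, (comp_pair P _ _ n k), IHt1, IHt2 by (auto; solve_type).
    reflexivity.
Qed.

Lemma comp_realize_tuple P n k s : acts_as_subst P n k s ->
  forall m G, (forall j, j < m -> bounded k (G j)) ->
  Comp P (realize_tuple k m G) ≈ realize_tuple n m (fun j => subst s (G j)).
Proof.
  intros HP; pose proof HP as (w & d & c & H).
  induction m; intros G HG; simpl.
  - apply (discard_n_nat P n k); auto.
  - rewrite (comp_pair P _ _ n k), (comp_realize P n k s HP), IHm
      by (auto; try solve_type; intros; apply HG; lia).
    reflexivity.
Qed.

Lemma realize_tuple_proj n m F i :
  i < m -> Comp (realize_tuple n m F) (proj m i) ≈ realize n (F i).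
Proof.
  revert F i; induction m; intros F i Hi; [lia|]; simpl realize_tuple; unfold proj.
  destruct i as [|i].
  - replace (S m - 0 - 1) with m by lia; simpl discard_n.
    rewrite (tens_unitl (Id 1)); apply pair_fst; auto with circ_wt; solve_type.
  - simpl discard_n; replace (S m - S i - 1) with (m - i - 1) by lia.
    rewrite (tens_assoc discard (discard_n i) (Id 1)).
    rewrite (tens_assoc discard (Tens (discard_n i) (Id 1))).
    rewrite pair_comp_tens, <- discard_n1 by solve_type.
    rewrite (discard_n_nat (realize n (F 0)) n 1), pair_discard_l
      by (auto with circ_wt; solve_type).
    apply (IHm (fun j => F (S j))); lia.
Qed.

Lemma realize_tuple_acts_as_subst n m F : acts_as_subst (realize_tuple n m F) n m F.
Proof.
  split; [|split; [|split]]; auto with circ_wt; try solve_type.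
  intros; apply realize_tuple_proj; auto.
Qed.

Lemma weaken_comp a c X : dom X = a ->
  Comp (Tens (Id a) (discard_n c)) X ≈ Tens X (discard_n c).
Proof.
  intros; transitivity (Comp (Tens (Id a) (discard_n c)) (Tens X (Id 0))).
  - rewrite tens_unitr; reflexivity.
  - rewrite <- tens_comp, comp_idl, comp_idr by solve_type; reflexivity.
Qed.

Lemma shift_comp a c X : dom X = c ->
  Comp (Tens (discard_n a) (Id c)) X ≈ Tens (discard_n a) X.
Proof.
  intros; transitivity (Comp (Tens (discard_n a) (Id c)) (Tens (Id 0) X)).
  - rewrite tens_unitl; reflexivity.
  - rewrite <- tens_comp, comp_idl, comp_idr by solve_type; reflexivity.
Qed.

Lemma weaken_acts_as_subst a c : acts_as_subst (Tens (Id a) (discard_n c)) (a + c) a TVar.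
Proof.
  split; [solve_wt | split; [solve_type | split; [solve_type |]]].
  intros i Hi; rewrite realize_var by lia.
  rewrite weaken_comp by (apply proj_typed; auto); unfold proj.
  rewrite tens_assoc, <- discard_n_add.
  replace (a + c - i - 1) with (a - i - 1 + c) by lia; reflexivity.
Qed.

Lemma shift_acts_as_subst a c :
  acts_as_subst (Tens (discard_n a) (Id c)) (a + c) c (fun i => TVar (a + i)).
Proof.
  split; [solve_wt | split; [solve_type | split; [solve_type |]]].
  intros i Hi; rewrite realize_var by lia.
  rewrite shift_comp by (apply proj_typed; auto); unfold proj.
  rewrite <- !tens_assoc, <- discard_n_add.
  replace (a + c - (a + i) - 1) with (c - i - 1) by lia; reflexivity.
Qed.

Lemma id_realize_tuple n : Id n ≈ realize_tuple n n TVar.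
Proof.
  induction n; [reflexivity|].
  rewrite (pair_eta (Id (S n)) (S n) 1 n), !comp_idl by (simpl; auto; solve_type).
  simpl realize_tuple; apply pair_Proper.
  - unfold proj; replace (S n - 0 - 1) with n by lia.
    simpl discard_n; rewrite tens_unitl; reflexivity.
  - transitivity (Comp (Tens (discard_n 1) (Id n)) (Id n));
    [rewrite comp_idr by solve_type; reflexivity|].
    rewrite IHn at 2.
    rewrite (comp_realize_tuple _ _ _ _ (shift_acts_as_subst 1 n)) by (simpl; auto).
    reflexivity.
Qed.

Lemma weaken_realize_tuple a c : Tens (Id a) (discard_n c) ≈ realize_tuple (a + c) a TVar.
Proof.
  transitivity (Comp (Tens (Id a) (discard_n c)) (Id a));
    [rewrite comp_idr by solve_type; reflexivity|].
  rewrite id_realize_tuple at 2.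
  rewrite (comp_realize_tuple _ _ _ _ (weaken_acts_as_subst a c)) by (simpl; auto); reflexivity.
Qed.

Lemma shift_realize_tuple a c :
  Tens (discard_n a) (Id c) ≈ realize_tuple (a + c) c (fun j => TVar (a + j)).
Proof.
  transitivity (Comp (Tens (discard_n a) (Id c)) (Id c));
    [rewrite comp_idr by solve_type; reflexivity|].
  rewrite id_realize_tuple at 2.
  rewrite (comp_realize_tuple _ _ _ _ (shift_acts_as_subst a c)) by (simpl; auto); reflexivity.
Qed.

Lemma realize_tuple_add n p q F :
  realize_tuple n (p + q) F
  ≈ pair n (realize_tuple n p F) (realize_tuple n q (fun j => F (p + j))).
Proof.
  rewrite (pair_eta (realize_tuple n (p + q) F) n p q) at 1 by (auto with circ_wt; solve_type).
  rewrite weaken_realize_tuple, shift_realize_tuple.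
  rewrite !(comp_realize_tuple _ _ _ _ (realize_tuple_acts_as_subst n (p + q) F))
    by (simpl; intros; lia).
  reflexivity.
Qed.

(** * Completeness *)

(* [interp c j] is output [j] of [c], a polynomial in the inputs [0 .. dom c - 1]. *)
Definition interp_gen (x : gen) : nat -> term :=
  match x with
  | g_discard | g_zero => fun _ => TZero
  | g_copy => fun _ => TVar 0
  | g_add => fun _ => TAdd (TVar 0) (TVar 1)
  | g_one => fun _ => TOne
  | g_and => fun _ => TMul (TVar 0) (TVar 1)
  end.

Fixpoint interp (c : circ) : nat -> term :=
  match c with
  | Gen x => interp_gen x
  | Id n => TVar
  | Sym m n => fun j => if j <? n then TVar (m + j) else TVar (j - n)
  | Comp f g => fun j => subst (interp f) (interp g j)
  | Tens f g => fun j => if j <? cod f then interp f j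
                         else subst (fun i => TVar (dom f + i)) (interp g (j - cod f))
  end.

Lemma interp_bounded c : wt c -> forall j, j < cod c -> bounded (dom c) (interp c j).
Proof.
  induction c; simpl; intros w j Hj.
  - destruct g; simpl in *; lia.
  - auto.
  - destruct (Nat.ltb_spec j n0); simpl; lia.
  - destruct w as (w1 & w2 & e); apply bounded_subst with (n := dom c2); auto.
    intros; apply IHc1; auto; lia.
  - destruct w as (w1 & w2); destruct (Nat.ltb_spec j (cod c1)).
    + apply bounded_mono with (dom c1); auto; lia.
    + apply bounded_subst with (n := dom c2); [apply IHc2; auto; lia | simpl; intros; lia].
Qed.

Lemma tens_realize_tuple a b c d F G :
  (forall j, j < b -> bounded a (F j)) -> (forall j, j < d -> bounded c (G j)) ->
  Tens (realize_tuple a b F) (realize_tuple c d G)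
  ≈ realize_tuple (a + c) (b + d)
      (fun j => if j <? b then F j else subst (fun i => TVar (a + i)) (G (j - b))).
Proof.
  intros HF HG; set (X := Tens (realize_tuple a b F) (realize_tuple c d G)).
  rewrite (pair_eta X (a + c) b d) at 1 by (subst X; solve_wt; solve_type).
  subst X; rewrite realize_tuple_add; apply pair_Proper.
  - rewrite <- tens_comp, (comp_idr b), (discard_n_nat (realize_tuple c d G) c d)
      by (auto with circ_wt; solve_type).
    rewrite <- (weaken_comp a c), weaken_realize_tuple by solve_type.
    rewrite (comp_realize_tuple _ _ _ _ (realize_tuple_acts_as_subst (a + c) a TVar)) by auto.
    erewrite realize_tuple_ext; [reflexivity|].
    intros j Hj; simpl; destruct (Nat.ltb_spec j b); [apply subst_var | lia].
  - rewrite <- tens_comp, (comp_idr d), (discard_n_nat (realize_tuple a b F) a b)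
      by (auto with circ_wt; solve_type).
    rewrite <- (shift_comp a c), shift_realize_tuple by solve_type.
    rewrite (comp_realize_tuple _ _ _ _
               (realize_tuple_acts_as_subst (a + c) c (fun j => TVar (a + j)))) by auto.
    erewrite realize_tuple_ext; [reflexivity|].
    intros j Hj; simpl; destruct (Nat.ltb_spec (b + j) b); [lia|].
    replace (b + j - b) with j by lia; reflexivity.
Qed.

Lemma proj_1_0 : proj 1 0 ≈ Id 1.
Proof. unfold proj; simpl; rewrite tens_unitr, tens_unitl; reflexivity. Qed.

Lemma pair_proj_2 : pair 2 (proj 2 0) (proj 2 1) ≈ Id 2.
Proof.
  rewrite id_realize_tuple; simpl.
  change (Tens discard (Tens discard (Id 0))) with (discard_n 2).
  rewrite (pair_discard_r 2 (proj 2 1)) by reflexivity; reflexivity.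
Qed.

Lemma gen_realize_interp x : Gen x ≈ realize_tuple (gen_dom x) (gen_cod x) (interp_gen x).
Proof.
  destruct x; simpl;
    change (Tens discard (Id 0)) with (discard_n 1) in *;
    change (Tens discard (discard_n 1)) with (discard_n 2) in *.
  - symmetry; apply discard_n1.
  - rewrite (pair_eta copy 1 1 1) at 1 by reflexivity.
    change (Tens discard (Id 0)) with (discard_n 1).
    rewrite proj_1_0, (pair_discard_r 1 (Id 1)), discard_n1, copy_counitr, copy_counitl
      by reflexivity.
    reflexivity.
  - rewrite pair_discard_r, comp_idl by reflexivity; reflexivity.
  - rewrite pair_discard_r, pair_proj_2, comp_idl by reflexivity; reflexivity.
  - rewrite pair_discard_r, comp_idl by reflexivity; reflexivity.
  - rewrite pair_discard_r, pair_proj_2, comp_idl by reflexivity; reflexivity.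
Qed.

Lemma sym_realize_interp m n : Sym m n ≈ realize_tuple (m + n) (n + m) (interp (Sym m n)).
Proof.
  rewrite (pair_eta (Sym m n) (m + n) n m) at 1 by (simpl; auto; lia).
  rewrite realize_tuple_add; apply pair_Proper.
  - rewrite <- (sym_nat (discard_n m) (Id n) 0 n m n), sym_unitl, comp_idr by solve_type.
    rewrite shift_realize_tuple.
    erewrite realize_tuple_ext; [reflexivity|].
    intros j Hj; simpl; destruct (Nat.ltb_spec j n); [reflexivity | lia].
  - rewrite <- (sym_nat (Id m) (discard_n n) m 0 m n), sym_unitr, comp_idr by solve_type.
    rewrite (Nat.add_comm m n) at 1; rewrite weaken_realize_tuple, Nat.add_comm.
    erewrite realize_tuple_ext; [reflexivity|].
    intros j Hj; simpl; destruct (Nat.ltb_spec (n + j) n); [lia|]; f_equal; lia.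
Qed.

Theorem realize_interp c : wt c -> c ≈ realize_tuple (dom c) (cod c) (interp c).
Proof.
  induction c; intros w.
  - apply gen_realize_interp.
  - apply id_realize_tuple.
  - apply sym_realize_interp.
  - destruct w as (w1 & w2 & e); simpl.
    rewrite IHc1, IHc2 at 1 by auto; rewrite <- e.
    rewrite (comp_realize_tuple _ _ _ _
               (realize_tuple_acts_as_subst (dom c1) (cod c1) (interp c1))); [reflexivity|].
    intros; rewrite e; apply interp_bounded; auto.
  - destruct w as (w1 & w2); simpl.
    rewrite IHc1, IHc2 at 1 by auto.
    rewrite tens_realize_tuple by (intros; apply interp_bounded; auto); reflexivity.
Qed.

Lemma ceq_of_interp X Y : wt X -> wt Y -> dom X = dom Y -> cod X = cod Y ->
  (forall j, j < cod X -> interp X j = interp Y j) -> X ≈ Y.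
Proof.
  intros wX wY d c H; rewrite (realize_interp X wX), (realize_interp Y wY), d, c.
  erewrite realize_tuple_ext; [reflexivity|]; intros; apply H; lia.
Qed.

Ltac by_interp := apply ceq_of_interp; [solve_wt | solve_wt | solve_type | solve_type |
  let j := fresh "j" in let Hj := fresh "Hj" in
  intros j Hj; simpl in Hj; destruct j as [|[|[|[|j]]]]; first [reflexivity | lia]].

Lemma realize_pattern k l r : bounded k l -> bounded k r -> realize k l ≈ realize k r ->
  forall F n, realize n (subst F l) ≈ realize n (subst F r).
Proof.
  intros hl hr H F n.
  pose proof (realize_tuple_acts_as_subst n k F) as HF.
  rewrite <- (comp_realize _ _ _ _ HF l hl), <- (comp_realize _ _ _ _ HF r hr), H.
  reflexivity.
Qed.

Lemma realize_add0 : realize 1 (TAdd TZero (TVar 0)) ≈ realize 1 (TVar 0).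
Proof.
  simpl; transitivity (Comp (Tens zero (Id 1)) add);
    [apply Comp_Proper; [by_interp | reflexivity]|].
  rewrite proj_1_0; by_axiom.
Qed.

Lemma realize_mul1 : realize 1 (TMul TOne (TVar 0)) ≈ realize 1 (TVar 0).
Proof.
  simpl; transitivity (Comp (Tens one (Id 1)) and_g);
    [apply Comp_Proper; [by_interp | reflexivity]|].
  rewrite proj_1_0; by_axiom.
Qed.

Lemma realize_addC : realize 2 (TAdd (TVar 0) (TVar 1)) ≈ realize 2 (TAdd (TVar 1) (TVar 0)).
Proof.
  simpl; transitivity (Comp (Id 2) add);
    [apply Comp_Proper; [by_interp | reflexivity]|].
  transitivity (Comp sigma add); [|apply Comp_Proper; [by_interp | reflexivity]].
  rewrite comp_idl by reflexivity; symmetry; by_axiom.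
Qed.

Lemma realize_mulC : realize 2 (TMul (TVar 0) (TVar 1)) ≈ realize 2 (TMul (TVar 1) (TVar 0)).
Proof.
  simpl; transitivity (Comp (Id 2) and_g);
    [apply Comp_Proper; [by_interp | reflexivity]|].
  transitivity (Comp sigma and_g); [|apply Comp_Proper; [by_interp | reflexivity]].
  rewrite comp_idl by reflexivity; symmetry; by_axiom.
Qed.

Lemma realize_addA :
  realize 3 (TAdd (TAdd (TVar 0) (TVar 1)) (TVar 2))
  ≈ realize 3 (TAdd (TVar 0) (TAdd (TVar 1) (TVar 2))).
Proof.
  simpl; transitivity (Comp (Tens add (Id 1)) add);
    [apply Comp_Proper; [by_interp | reflexivity]|].
  transitivity (Comp (Tens (Id 1) add) add); [|apply Comp_Proper; [by_interp | reflexivity]].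
  by_axiom.
Qed.

Lemma realize_mulA :
  realize 3 (TMul (TMul (TVar 0) (TVar 1)) (TVar 2))
  ≈ realize 3 (TMul (TVar 0) (TMul (TVar 1) (TVar 2))).
Proof.
  simpl; transitivity (Comp (Tens and_g (Id 1)) and_g);
    [apply Comp_Proper; [by_interp | reflexivity]|].
  transitivity (Comp (Tens (Id 1) and_g) and_g); [|apply Comp_Proper; [by_interp | reflexivity]].
  by_axiom.
Qed.

Lemma realize_distr :
  realize 3 (TMul (TVar 0) (TAdd (TVar 1) (TVar 2)))
  ≈ realize 3 (TAdd (TMul (TVar 0) (TVar 1)) (TMul (TVar 0) (TVar 2))).
Proof.
  simpl; transitivity (Comp (Tens (Id 1) add) and_g);
    [apply Comp_Proper; [by_interp | reflexivity]|].
  transitivity (Comp (Comp (Comp (Tens copy (Id 2)) (Tens (Tens (Id 1) sigma) (Id 1)))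
                           (Tens and_g and_g)) add); [by_axiom|].
  apply Comp_Proper; [by_interp | reflexivity].
Qed.

Lemma realize_char2 : realize 1 (TAdd (TVar 0) (TVar 0)) ≈ realize 1 TZero.
Proof.
  simpl; transitivity (Comp copy add);
    [apply Comp_Proper; [by_interp | reflexivity]|].
  change (Tens discard (Id 0)) with (discard_n 1); rewrite discard_n1; by_axiom.
Qed.

Ltac instantiate_pattern law F :=
  refine (realize_pattern _ _ _ _ _ law F _); simpl; intuition lia.

Lemma realize_teq t t' : teq t t' -> forall n, realize n t ≈ realize n t'.
Proof.
  induction 1; intros n.
  - reflexivity.
  - symmetry; auto.
  - etransitivity; eauto.
  - simpl; rewrite IHteq1, IHteq2; reflexivity.
  - simpl; rewrite IHteq1, IHteq2; reflexivity.
  - instantiate_pattern realize_add0 (fun _ : nat => t).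
  - instantiate_pattern realize_addC (fun i => match i with 0 => s | _ => t end).
  - instantiate_pattern realize_addA (fun i => match i with 0 => s | 1 => t | _ => u end).
  - instantiate_pattern realize_mul1 (fun _ : nat => t).
  - instantiate_pattern realize_mulC (fun i => match i with 0 => s | _ => t end).
  - instantiate_pattern realize_mulA (fun i => match i with 0 => s | 1 => t | _ => u end).
  - instantiate_pattern realize_distr (fun i => match i with 0 => s | 1 => t | _ => u end).
  - instantiate_pattern realize_char2 (fun _ : nat => t).
Qed.

Lemma realize_tuple_teq n m F G :
  (forall j, j < m -> teq (F j) (G j)) -> realize_tuple n m F ≈ realize_tuple n m G.
Proof.
  revert F G; induction m; intros F G H; simpl; [reflexivity|].
  rewrite (realize_teq _ _ (H 0 ltac:(lia))), (IHm (fun j => F (S j)) (fun j => G (S j)))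
    by (intros; apply H; lia).
  reflexivity.
Qed.

Theorem interp_complete X Y : wt X -> wt Y -> dom X = dom Y -> cod X = cod Y ->
  (forall j, j < cod X -> teq (interp X j) (interp Y j)) -> eqA X Y.
Proof.
  intros wX wY d c H; apply eqA_of_ceq; auto.
  rewrite (realize_interp X wX), (realize_interp Y wY), d, c.
  apply realize_tuple_teq; intros; apply H; lia.
Qed.

(** * Soundness *)

Ltac destruct_ltb := match goal with
  | |- context [?a <? ?b] => destruct (Nat.ltb_spec a b); try lia
  end.

Ltac case_ltb := repeat (simpl; destruct_ltb).

Lemma interp_copy_n n j : j < n + n -> interp (copy_n n) j = TVar (if j <? n then j else j - n).
Proof.
  revert j; induction n; intros j Hj; [lia|]; simpl interp.
  repeat (simpl; first [destruct_ltb | rewrite IHn by lia]); f_equal; lia.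
Qed.

Lemma interp_tens_comp f g h k j : wt g -> wt k -> cod f = dom g -> cod h = dom k ->
  j < cod g + cod k ->
  interp (Tens (Comp f g) (Comp h k)) j = interp (Comp (Tens f h) (Tens g k)) j.
Proof.
  intros wg wk e1 e2 Hj; simpl; destruct (Nat.ltb_spec j (cod g)).
  - apply (subst_ext_bounded (dom g)); [apply interp_bounded; auto|].
    intros i Hi; simpl; destruct (Nat.ltb_spec i (cod f)); [reflexivity | lia].
  - rewrite !subst_comp; apply subst_ext; intros i; simpl.
    destruct (Nat.ltb_spec (dom g + i) (cod f)); [lia|].
    replace (dom g + i - cod f) with i by lia; reflexivity.
Qed.

Lemma interp_tens_assoc f g h j :
  interp (Tens (Tens f g) h) j = interp (Tens f (Tens g h)) j.
Proof.
  case_ltb; try reflexivity.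
  replace (j - cod f - cod g) with (j - (cod f + cod g)) by lia.
  rewrite subst_comp; apply subst_ext; intros; simpl; f_equal; lia.
Qed.

Lemma interp_sym_nat f g j : wt g -> j < cod g + cod f ->
  interp (Comp (Tens f g) (Sym (cod f) (cod g))) j
  = interp (Comp (Sym (dom f) (dom g)) (Tens g f)) j.
Proof.
  intros wg Hj; simpl; destruct (Nat.ltb_spec j (cod g)).
  - case_ltb; replace (cod f + j - cod f) with j by lia.
    apply (subst_ext_bounded (dom g)); [apply interp_bounded; auto|].
    intros i Hi; simpl; destruct (Nat.ltb_spec i (dom g)); [reflexivity | lia].
  - case_ltb; rewrite subst_comp; simpl.
    rewrite <- (subst_var (interp f (j - cod g))) at 1; apply subst_ext; intros i.
    destruct (Nat.ltb_spec (dom g + i) (dom g)); [lia|]; f_equal; lia.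
Qed.

Lemma interp_copy_nat f j : wt f -> j < cod f + cod f ->
  interp (Comp f (copy_n (cod f))) j = interp (Comp (copy_n (dom f)) (Tens f f)) j.
Proof.
  intros wf Hj; simpl; rewrite interp_copy_n by lia.
  destruct (Nat.ltb_spec j (cod f)); simpl.
  - symmetry; apply (subst_id_bounded (dom f)); [apply interp_bounded; auto|].
    intros i Hi; rewrite interp_copy_n by lia.
    destruct (Nat.ltb_spec i (dom f)); [reflexivity | lia].
  - rewrite subst_comp; symmetry.
    apply (subst_id_bounded (dom f)); [apply interp_bounded; auto; lia|].
    intros i Hi; simpl; rewrite interp_copy_n by lia.
    destruct (Nat.ltb_spec (dom f + i) (dom f)); [lia|]; f_equal; lia.
Qed.

Lemma interp_ax f g : ax f g -> wt f -> wt g -> dom f = dom g -> cod f = cod g ->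
  forall j, j < cod f -> teq (interp f j) (interp g j).
Proof.
  intros Hax wf wg hd hc j Hj.
  destruct Hax; simpl in wf, wg, hd, hc, Hj.
  (* Goals 15-17 and 20-29 are the laws of A between generators. *)
  15-17, 20-29: destruct j as [|[|[|]]]; simpl; try lia; first [ring | apply teq_char2].
  - simpl; rewrite subst_comp; reflexivity.
  - simpl; rewrite subst_var; reflexivity.
  - reflexivity.
  - destruct wf as ((_ & ? & ?) & (_ & ? & ?)); rewrite interp_tens_comp; auto; reflexivity.
  - case_ltb; apply teq_var; lia.
  - rewrite interp_tens_assoc; reflexivity.
  - simpl; rewrite Nat.sub_0_r; change (fun i => TVar i) with TVar; rewrite subst_var; reflexivity.
  - simpl; destruct (Nat.ltb_spec j (cod f)); [reflexivity | lia].
  - case_ltb; apply teq_var; lia.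
  - destruct wf as ((_ & ?) & _); rewrite interp_sym_nat; auto; reflexivity.
  - case_ltb; apply teq_var; lia.
  - case_ltb; apply teq_var; lia.
  - case_ltb; apply teq_var; lia.
  - case_ltb; apply teq_var; lia.
  - destruct wf as (? & _); rewrite cod_copy_n in Hj; rewrite interp_copy_nat; auto; reflexivity.
  - rewrite cod_discard_n in Hj; lia.
Qed.

Theorem interp_sound c d : eqA c d -> forall j, j < cod c -> teq (interp c j) (interp d j).
Proof.
  induction 1; intros j Hj.
  - apply interp_ax; auto.
  - reflexivity.
  - destruct (eqA_typed _ _ H) as (_ & _ & _ & e); symmetry; apply IHeqA; lia.
  - destruct (eqA_typed _ _ H) as (_ & _ & _ & e); rewrite IHeqA1, IHeqA2 by lia; reflexivity.
  - destruct (eqA_typed _ _ H) as (wf & wf' & df & cf).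
    destruct (eqA_typed _ _ H0) as (wg & wg' & dg & cg); simpl in *.
    rewrite (subst_teq (interp f) _ _ (IHeqA2 j Hj)).
    apply (subst_teq_bounded (dom g')); [apply interp_bounded; auto; lia|].
    intros; apply IHeqA1; lia.
  - destruct (eqA_typed _ _ H) as (wf & wf' & df & cf).
    destruct (eqA_typed _ _ H0) as (wg & wg' & dg & cg); simpl in *.
    rewrite <- cf, <- df; destruct (Nat.ltb_spec j (cod f)).
    + apply IHeqA1; auto.
    + apply subst_teq, IHeqA2; lia.
Qed.

(** * The reverse derivative *)

(* [rev_deriv n m F] is [(x, δ) ↦ J_F(x)ᵀ δ] for [F] with [n] inputs and [m]
   outputs: [x] are the variables [0 .. n-1] and [δ] the variables [n .. n+m-1]. *)
Definition rev_deriv (n m : nat) (F : nat -> term) (i : nat) : term :=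
  tsum m (fun j => TMul (deriv i (F j)) (TVar (n + j))).

Lemma rev_deriv_teq n m F G :
  (forall j, j < m -> teq (F j) (G j)) -> forall i, teq (rev_deriv n m F i) (rev_deriv n m G i).
Proof.
  intros H i; apply tsum_teq; intros j Hj; rewrite (deriv_teq i _ _ (H j Hj)); reflexivity.
Qed.

Lemma Rt_typed f : wt f -> wt (Rt f) /\ dom (Rt f) = dom f + cod f /\ cod (Rt f) = dom f.
Proof.
  induction f; simpl; intros w.
  - destruct g; simpl; repeat split; auto.
  - solve_wt.
  - solve_wt.
  - destruct w as (w1 & w2 & e), (IHf1 w1) as (? & -> & ->), (IHf2 w2) as (? & -> & ->).
    autorewrite with circ_type; repeat split; auto with circ_wt; lia.
  - destruct w as (w1 & w2), (IHf1 w1) as (? & -> & ->), (IHf2 w2) as (? & -> & ->).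
    repeat split; auto; lia.
Qed.

Definition computes_rev_deriv (f : circ) : Prop :=
  forall i, i < dom f -> teq (interp (Rt f) i) (rev_deriv (dom f) (cod f) (interp f) i).

Lemma Rt_gen_correct x : computes_rev_deriv (Gen x).
Proof. destruct x; intros [|[|]] H; unfold rev_deriv; simpl in *; try lia; ring. Qed.

Lemma Rt_Id_correct n : computes_rev_deriv (Id n).
Proof.
  intros i H; unfold rev_deriv; simpl in *.
  rewrite cod_discard_n, dom_discard_n, Nat.sub_0_r, (tsum_delta n _ i H).
  - rewrite Nat.eqb_refl; simpl; ring.
  - intros j Hj Hne; destruct (Nat.eqb_spec j i); [lia | simpl; ring].
Qed.

Lemma Rt_Sym_correct m n : computes_rev_deriv (Sym m n).
Proof.
  intros i H; unfold rev_deriv; simpl in *.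
  rewrite cod_discard_n, dom_discard_n, Nat.sub_0_r.
  assert (Hoff : forall j, j < n + m -> j <> (if i <? m then n + i else i - m) ->
            teq (TMul (deriv i (if j <? n then TVar (m + j) else TVar (j - n)))
                      (TVar (m + n + j))) TZero).
  { intros j Hj Hne; destruct (Nat.ltb_spec i m), (Nat.ltb_spec j n); simpl.
    all: rewrite (proj2 (Nat.eqb_neq _ _)) by lia; ring. }
  destruct (Nat.ltb_spec i m).
  - rewrite (tsum_delta (n + m) _ (n + i)) by (auto; lia).
    destruct (Nat.ltb_spec (n + i) n); [lia|]; simpl.
    replace (n + i - n) with i by lia; rewrite Nat.eqb_refl.
    transitivity (TVar (m + n + (n + i))); [apply teq_var; lia | ring].
  - rewrite (tsum_delta (n + m) _ (i - m)) by (auto; lia).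
    destruct (Nat.ltb_spec (i - m) n); [|lia]; simpl.
    replace (m + (i - m)) with i by lia; rewrite Nat.eqb_refl.
    transitivity (TVar (m + n + (i - m))); [apply teq_var; lia | ring].
Qed.

Lemma interp_copy_then_apply f c : wt f ->
  let s := interp (Comp (Tens (copy_n (dom f)) (Id c)) (Tens (Tens (Id (dom f)) f) (Id c))) in
  (forall k, k < dom f -> s k = TVar k) /\
  (forall x, s (dom f + x) = if x <? cod f then interp f x else TVar (dom f + (x - cod f))).
Proof.
  intros wf s; subst s; simpl; rewrite dom_copy_n, cod_copy_n.
  set (a := dom f); set (b := cod f); split.
  - intros k Hk; case_ltb; rewrite interp_copy_n by lia; case_ltb; reflexivity.
  - intros x; destruct (Nat.ltb_spec x b); case_ltb.
    + replace (a + x - a) with x by lia; rewrite subst_comp.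
      apply (subst_id_bounded a); [apply interp_bounded; auto|].
      intros y Hy; case_ltb; rewrite interp_copy_n by lia; case_ltb; f_equal; lia.
    + f_equal; lia.
Qed.

Lemma interp_Rt_comp_prefix f g : wt f ->
  let a := dom f in let b := cod f in let c := cod g in
  let s := interp (Comp (Comp (Tens (copy_n a) (Id c)) (Tens (Tens (Id a) f) (Id c)))
                        (Tens (Id a) (Rt g))) in
  (forall k, k < a -> s k = TVar k) /\
  (forall k, s (a + k)
             = subst (fun x => if x <? b then interp f x else TVar (a + (x - b))) (interp (Rt g) k)).
Proof.
  intros wf a b c s; destruct (interp_copy_then_apply f c wf) as [Ha Hb]; split.
  - intros k Hk; subst s; simpl; destruct (Nat.ltb_spec k a); [apply Ha; auto | lia].
  - intros k; subst s; simpl; destruct (Nat.ltb_spec (a + k) a); [lia|].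
    replace (a + k - a) with k by lia; rewrite subst_comp; apply subst_ext; intros x; apply Hb.
Qed.

Lemma Rt_Comp_correct f g : wt f -> wt g -> cod f = dom g ->
  computes_rev_deriv f -> computes_rev_deriv g -> computes_rev_deriv (Comp f g).
Proof.
  intros wf wg e IHf IHg i Hi; simpl in Hi.
  destruct (interp_Rt_comp_prefix f g wf) as [Hs_in Hs_rg].
  set (s := interp (Comp (Comp _ _) _)) in Hs_in, Hs_rg.
  set (a := dom f) in *; set (b := cod f) in *; set (c := cod g) in *.
  set (tau := fun x => if x <? b then interp f x else TVar (a + (x - b))) in Hs_rg.
  change (teq (subst s (interp (Rt f) i))
              (rev_deriv a c (fun j => subst (interp f) (interp g j)) i)).
  clearbody s.
  rewrite (subst_teq _ _ _ (IHf i Hi)); unfold rev_deriv; rewrite subst_tsum.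
  transitivity (tsum b (fun k => TMul (deriv i (interp f k))
      (tsum c (fun l => TMul (subst (interp f) (deriv k (interp g l))) (TVar (a + l)))))).
  - apply tsum_teq; intros k Hk; simpl; apply teq_mul.
    + rewrite (subst_id_bounded a); [reflexivity | | auto].
      apply bounded_deriv, interp_bounded; auto.
    + rewrite Hs_rg; rewrite e in Hk; rewrite (subst_teq _ _ _ (IHg k Hk)); unfold rev_deriv.
      rewrite subst_tsum; apply tsum_teq; intros l Hl; simpl; apply teq_mul.
      * rewrite (subst_ext_bounded (dom g) _ (interp f)); [reflexivity | |].
        -- apply bounded_deriv, interp_bounded; auto.
        -- intros x Hx; subst tau; simpl; rewrite <- e in Hx.
           destruct (Nat.ltb_spec x b); [reflexivity | lia].
      * subst tau; simpl; rewrite <- e; case_ltb; apply teq_var; lia.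
  - symmetry.
    rewrite (tsum_teq c _ (fun l => tsum b (fun k =>
      TMul (TMul (subst (interp f) (deriv k (interp g l))) (deriv i (interp f k)))
           (TVar (a + l))))).
    + rewrite tsum_exchange; apply tsum_teq; intros k Hk; rewrite <- tsum_mul_l.
      apply tsum_teq; intros l Hl; ring.
    + intros l Hl; rewrite (deriv_subst i b), tsum_mul_r; [reflexivity|].
      rewrite e; apply interp_bounded; auto.
Qed.

Lemma interp_swap_middle a b c d :
  let P := interp (Tens (Tens (Id a) (Sym c b)) (Id d)) in
  (forall k, k < a -> P k = TVar k) /\
  (forall x, x < b -> P (a + x) = TVar (a + c + x)) /\
  (forall x, x < c -> P (a + b + x) = TVar (a + x)) /\
  (forall y, P (a + b + c + y) = TVar (a + c + b + y)).
Proof. repeat split; intros; case_ltb; simpl; f_equal; lia. Qed.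

Lemma Rt_Tens_correct f g : wt f -> wt g ->
  computes_rev_deriv f -> computes_rev_deriv g -> computes_rev_deriv (Tens f g).
Proof.
  intros wf wg IHf IHg i Hi; simpl in Hi.
  destruct (Rt_typed f wf) as (_ & df & cf), (Rt_typed g wg) as (_ & dg & cg).
  set (a := dom f) in *; set (b := cod f) in *; set (c := dom g) in *; set (d := cod g) in *.
  destruct (interp_swap_middle a b c d) as (P1 & P2 & P3 & P4).
  set (P := interp (Tens (Tens (Id a) (Sym c b)) (Id d))) in *.
  change (teq (subst P (interp (Tens (Rt f) (Rt g)) i))
              (rev_deriv (a + c) (b + d) (interp (Tens f g)) i)).
  clearbody P.
  unfold rev_deriv; rewrite tsum_split; simpl interp; rewrite cf, df; fold a b c d.
  destruct (Nat.ltb_spec i a).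
  - rewrite (subst_teq P _ _ (IHf i ltac:(lia))); unfold rev_deriv; rewrite subst_tsum.
    rewrite (tsum_zero d), teq_addC, teq_add0.
    + apply tsum_teq; intros k Hk; simpl; destruct (Nat.ltb_spec k b); [|lia]; apply teq_mul.
      * rewrite (subst_id_bounded a); [reflexivity | | auto].
        apply bounded_deriv, interp_bounded; auto.
      * rewrite P2 by auto; reflexivity.
    + intros j Hj; simpl; destruct (Nat.ltb_spec (b + j) b); [lia|].
      rewrite deriv_shift_below by auto; ring.
  - rewrite subst_comp; simpl; fold a b c d.
    replace i with (a + (i - a)) in * by lia; set (i' := i - a) in *.
    replace (a + i' - a) with i' by lia.
    rewrite (subst_teq _ _ _ (IHg i' ltac:(lia))); unfold rev_deriv; rewrite subst_tsum.
    rewrite (tsum_zero b), teq_add0.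
    + apply tsum_teq; intros k Hk; simpl; destruct (Nat.ltb_spec (b + k) b); [lia|].
      replace (b + k - b) with k by lia; rewrite deriv_shift; apply teq_mul.
      * rewrite (subst_ext_bounded c _ (fun x => TVar (a + x))); [reflexivity | |].
        -- apply bounded_deriv, interp_bounded; auto.
        -- intros x Hx; apply P3; auto.
      * fold c; replace (a + b + (c + k)) with (a + b + c + k) by lia.
        rewrite P4; apply teq_var; lia.
    + intros j Hj; simpl; destruct (Nat.ltb_spec j b); [|lia].
      rewrite (deriv_bounded_out a) by (try apply interp_bounded; auto; lia); ring.
Qed.

Theorem Rt_correct f : wt f -> computes_rev_deriv f.
Proof.
  induction f; intros w.
  - apply Rt_gen_correct.
  - apply Rt_Id_correct.
  - apply Rt_Sym_correct.
  - destruct w as (w1 & w2 & e); apply Rt_Comp_correct; auto.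
  - destruct w as (w1 & w2); apply Rt_Tens_correct; auto.
Qed.

Theorem mainTheorem3 (a b : nat) (c d : circ) :
  is_circuit a b c -> is_circuit a b d -> eqA c d -> eqA (Rt c) (Rt d).
Proof.
  intros (wc & <- & <-) (wd & dd & cd) H.
  destruct (Rt_typed c wc) as (wrc & drc & crc), (Rt_typed d wd) as (wrd & drd & crd).
  apply interp_complete; auto; try congruence.
  intros i Hi; rewrite crc in Hi.
  rewrite (Rt_correct c wc i), (Rt_correct d wd i), dd, cd by lia.
  apply rev_deriv_teq; intros j Hj; apply interp_sound; auto.
Qed.
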